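(* Let $\xi=(\xi_+,\xi_-)\in\mathcal{P}^2$ be minimal. Then the following three statements are equivalent: (1) there is a CSCA $\mathbf{a}$ with $\mathbf{a}\xi=u\xi$; (2) there is a CSCA $\mathbf{b}$ with $\mathbf{b}\xi=\binom{1}{u}$; (3) $\xi\wedge\bar\xi=u^{-1}+u$.
   Context: $\mathcal{P}$ denotes the ring of Laurent polynomials in $u$ over $\mathbb{Z}_2$; $\bar p(u)=p(u^{-1})$, applied entrywise to vectors. $\mathcal{R}$ is the subring of palindromes ($\bar p=p$). A CSCA is a $2\times2$ matrix with entries in $\mathcal{R}$ and determinant $1$. $\xi$ is minimal if $\xi_+,\xi_-$ have no common non-invertible divisor in $\mathcal{P}$. The wedge product is $\xi\wedge\eta=\xi_+\eta_-+\eta_+\xi_-$. *)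

From HB Require Import structures.
From mathcomp Require Import all_boot all_order all_algebra.

Set Implicit Arguments.
Unset Strict Implicit.
Unset Printing Implicit Defensive.

Import Order.TTheory GRing.Theory Num.Theory.
Local Open Scope ring_scope.

(* A Laurent polynomial u^k * p(u) (k : int, p : {poly 'F_2}) is stored in
   normal form: either p = 0 and k = 0, or p has nonzero constant term.
   Every Laurent polynomial has exactly one such representation. *)
Definition lnormal (kp : int * {poly 'F_2}) : bool :=
  if kp.2 == 0 then kp.1 == 0 else kp.2`_0 != 0.

Definition laurent := {kp : int * {poly 'F_2} | lnormal kp}.

Definition lexp (x : laurent) : int := (val x).1.
Definition lpoly (x : laurent) : {poly 'F_2} := (val x).2.

(* number of leading zero coefficients (the largest m with X^m | p, p != 0) *)
Definition lval (p : {poly 'F_2}) : nat := find (fun c : 'F_2 => c != 0) p.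

Lemma lnormalize_proof (k : int) (p : {poly 'F_2}) :
  lnormal (if p == 0 then (0%R, 0%R) else (k + (lval p)%:Z, drop_poly (lval p) p)).
Proof.
case: eqP => [_|/eqP p0]; first by rewrite /lnormal /= !eqxx.
rewrite /lnormal /=.
have hp : has (fun c : 'F_2 => c != 0) p.
  apply/hasP; exists (lead_coef p).
    rewrite lead_coefE; apply: mem_nth; by rewrite ltn_predL size_poly_gt0.
  by rewrite /= lead_coef_eq0.
have h0 : (drop_poly (lval p) p)`_0 != 0.
  by rewrite coef_drop_poly add0n; exact: (nth_find 0 hp).
by rewrite ifN //; apply: contra h0 => /eqP ->; rewrite coef0.
Qed.

Definition lnormalize (k : int) (p : {poly 'F_2}) : laurent :=
  exist (fun kp => lnormal kp) _ (lnormalize_proof k p).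

Definition lzero : laurent := lnormalize 0 0.
Definition lone : laurent := lnormalize 0 1.
Definition lmono (k : int) : laurent := lnormalize k 1.
Definition lu : laurent := lmono 1.
Definition luinv : laurent := lmono (-1).

Definition ladd (x y : laurent) : laurent :=
  let m := Order.min (lexp x) (lexp y) in
  lnormalize m ('X^(absz (lexp x - m)) * lpoly x + 'X^(absz (lexp y - m)) * lpoly y).

Definition lopp (x : laurent) : laurent := lnormalize (lexp x) (- lpoly x).

Definition lsub (x y : laurent) : laurent := ladd x (lopp y).

Definition lmul (x y : laurent) : laurent :=
  lnormalize (lexp x + lexp y) (lpoly x * lpoly y).

Definition rev_poly (p : {poly 'F_2}) : {poly 'F_2} :=
  \poly_(i < size p) p`_((size p).-1 - i).

(* conjugation  bar p (u) = p (u^-1):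
   u^-k p(u^-1) = u^-(k + deg p) * (reversed p)(u) *)
Definition lbar (x : laurent) : laurent :=
  lnormalize (- (lexp x + ((size (lpoly x)).-1)%:Z)) (rev_poly (lpoly x)).

Definition palindrome (x : laurent) : Prop := lbar x = x.

Definition ldvd (d x : laurent) : Prop := exists q, x = lmul d q.
Definition lunit (x : laurent) : Prop := exists y, lmul x y = lone.

Definition lvec := (laurent * laurent)%type.

Definition vbar (xi : lvec) : lvec := (lbar xi.1, lbar xi.2).
Definition vscale (c : laurent) (xi : lvec) : lvec := (lmul c xi.1, lmul c xi.2).

Definition minimal (xi : lvec) : Prop :=
  forall d, ldvd d xi.1 -> ldvd d xi.2 -> lunit d.

Definition wedge (xi eta : lvec) : laurent :=
  ladd (lmul xi.1 eta.2) (lmul eta.1 xi.2).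

Definition lmx := 'M[laurent]_2.
Definition i0 : 'I_2 := ord0.
Definition i1 : 'I_2 := ord_max.

Definition mxact (A : lmx) (xi : lvec) : lvec :=
  (ladd (lmul (A i0 i0) xi.1) (lmul (A i0 i1) xi.2),
   ladd (lmul (A i1 i0) xi.1) (lmul (A i1 i1) xi.2)).

Definition ldet (A : lmx) : laurent :=
  lsub (lmul (A i0 i0) (A i1 i1)) (lmul (A i0 i1) (A i1 i0)).

Definition csca (A : lmx) : Prop :=
  (forall i j, palindrome (A i j)) /\ ldet A = lone.

(* Embedding P into the fraction field of F_2[u] makes P a commutative ring of
   characteristic 2 in which conjugation is the ring involution u |-> u^-1, and every
   f satisfies f + f^bar = (u + u^-1) q with q palindromic.
   (3) => (2): writing xi_+/- + xi_+/-^bar = (u + u^-1) q_+/-, condition (3) becomes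
   the Bezout relation q_- xi_+ + q_+ xi_- = 1, the first row of a CSCA sending xi to
   (1, u).  (2) => (3), (1): a CSCA b with b xi = (1, u) gives xi = b^-1 (1, u), whose
   wedge with its conjugate is u + u^-1, and b^-1 [[0, 1], [1, u + u^-1]] b is a CSCA
   with eigenvector xi for u.  (1) => (3): xi and xi^bar are eigenvectors of a for u and
   u^-1; with a Bezout relation for the minimal vector xi this shows that
   xi /\ xi^bar = (u + u^-1) q divides u + u^-1, so the palindromic q is a unit, i.e. 1. *)

From HB Require Import structures.
From mathcomp Require Import all_boot all_order all_algebra fraction ring zify.

Set Implicit Arguments.
Unset Strict Implicit.
Unset Printing Implicit Defensive.

Import Order.TTheory GRing.Theory Num.Theory.
Local Open Scope ring_scope.

Local Notation K := {fraction {poly 'F_2}}.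

Definition Xfrac : K := tofrac 'X.
Definition cfrac : {rmorphism 'F_2 -> K} := (@tofrac _ \o polyC)%FUN.

Definition leval (z : K) (x : laurent) : K :=
  (map_poly cfrac (lpoly x)).[z] * z ^ lexp x.

Lemma Xfrac_neq0 : Xfrac != 0.
Proof. by rewrite tofrac_eq0 polyX_eq0. Qed.

Lemma Xfrac_inv_neq0 : Xfrac^-1 != 0.
Proof. by rewrite invr_eq0 Xfrac_neq0. Qed.

Lemma horner_cfrac_Xfrac p : (map_poly cfrac p).[Xfrac] = tofrac p.
Proof. by rewrite (poly_initial (@tofrac {poly 'F_2}) p). Qed.

Lemma lval_split p : p = drop_poly (lval p) p * 'X^(lval p).
Proof.
rewrite -{1}(poly_take_drop (lval p) p) [take_poly _ _](_ : _ = 0) ?add0r //.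
apply/polyP => i; rewrite coef_take_poly coef0; case: ifP => // lt_i.
by have /negbFE/eqP := before_find 0 lt_i.
Qed.

Lemma horner_rev_poly z p : z != 0 ->
  (map_poly cfrac (rev_poly p)).[z] = (map_poly cfrac p).[z^-1] * z ^+ (size p).-1.
Proof.
move=> z_neq0; set n := size p.
have size_map q : size (map_poly cfrac q) = size q.
  by apply: size_map_inj_poly; [exact: fmorph_inj | exact: rmorph0].
rewrite !(horner_coef_wide (n := n)) ?size_map ?size_poly // mulr_suml.
rewrite (reindex_inj rev_ord_inj); apply: eq_bigr => i _.
rewrite !coef_map coef_poly /= -/n; have lt_in := ltn_ord i.
rewrite ifT; last by lia.
rewrite (_ : (n.-1 - (n - i.+1) = i)%N); last by lia.
by rewrite (_ : (n - i.+1 = n.-1 - i)%N) ?exprB ?unitfE // ?exprVn; [ring | lia | lia].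
Qed.

Section Evaluation.
Variable z : K.
Hypothesis z_neq0 : z != 0.

Lemma leval_lnormalize k p :
  leval z (lnormalize k p) = (map_poly cfrac p).[z] * z ^ k.
Proof.
rewrite /leval /lexp /lpoly /=; case: eqP => [->|_] /=; rewrite -/cfrac.
  by rewrite rmorph0 horner0 !mul0r.
rewrite [in RHS](lval_split p) rmorphM /= hornerM map_polyXn hornerXn.
by rewrite expfzDr // -exprnP mulrAC mulrA.
Qed.

Lemma leval_add x y : leval z (ladd x y) = leval z x + leval z y.
Proof.
have shift k m : (m <= k)%R -> z ^+ `|k - m| * z ^ m = z ^ k.
  by move=> le_mk; rewrite exprnP gez0_abs ?subr_ge0 // -expfzDr // subrK.
rewrite /ladd leval_lnormalize; set m := Order.min _ _.
rewrite rmorphD /= hornerD !rmorphM /= !hornerM !map_polyXn !hornerXn /leval.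
rewrite -(shift (lexp x) m) ?ge_min ?lexx // -(shift (lexp y) m) ?ge_min ?lexx ?orbT //.
ring.
Qed.

Lemma leval_mul x y : leval z (lmul x y) = leval z x * leval z y.
Proof. by rewrite /lmul leval_lnormalize rmorphM hornerM expfzDr // /leval mulrACA. Qed.

Lemma leval_opp x : leval z (lopp x) = - leval z x.
Proof. by rewrite /lopp leval_lnormalize rmorphN hornerN mulNr. Qed.

Lemma leval_lmono k : leval z (lmono k) = z ^ k.
Proof. by rewrite leval_lnormalize rmorph1 hornerC mul1r. Qed.

Lemma leval_lzero : leval z lzero = 0.
Proof. by rewrite leval_lnormalize rmorph0 horner0 mul0r. Qed.

Lemma leval_lone : leval z lone = 1.
Proof. by rewrite leval_lmono expr0z. Qed.

Lemma leval_lbar x : leval z (lbar x) = leval z^-1 x.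
Proof.
rewrite /lbar leval_lnormalize horner_rev_poly // /leval -mulrA.
by rewrite exprnP -expfzDr // exprz_inv; congr (_ * z ^ _); ring.
Qed.

Definition levalE :=
  (leval_add, leval_mul, leval_opp, leval_lmono, leval_lzero, leval_lone).

End Evaluation.

Lemma leval_Xfrac x : leval Xfrac x = tofrac (lpoly x) * Xfrac ^ lexp x.
Proof. by rewrite /leval horner_cfrac_Xfrac. Qed.

Lemma leval_Xfrac_inj : injective (leval Xfrac).
Proof.
have le_inj x y : (lexp x <= lexp y)%R -> leval Xfrac x = leval Xfrac y -> x = y.
  case: x y => [[k p] nx] [[m q] ny]; rewrite !leval_Xfrac /lexp /lpoly /= => le_km E.
  apply: val_inj => /=; move: nx ny E.
  have [n ->] : exists n : nat, m = k + n.
    by exists `|m - k|%N; rewrite gez0_abs ?subr_ge0 //; ring.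
  rewrite expfzDr ?Xfrac_neq0 // -exprnP /Xfrac -rmorphXn mulrCA -rmorphM mulrC.
  move=> nx ny /(mulfI (expfz_neq0 k Xfrac_neq0)) /eqP; rewrite tofrac_eq => /eqP pE.
  suff [-> ->] : n = 0%N /\ p = q by rewrite addr0.
  move: nx ny; rewrite /lnormal /= pE; case: n pE => [|n] pE; first by rewrite mulr1.
  rewrite mulf_eq0 (negbTE (monic_neq0 (monicXn _ _))) orbF coefMXn /=.
  by case: eqP => [_ /eqP ->|_ /negP].
move=> x y; case: (lerP (lexp x) (lexp y)) => [le|/ltW le] E; first exact: le_inj.
by apply/esym/le_inj.
Qed.

Lemma leval_Xfrac_lbar x : leval Xfrac (lbar x) = leval Xfrac^-1 x.
Proof. exact/leval_lbar/Xfrac_neq0. Qed.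

Lemma leval_Xfrac_inv_lbar x : leval Xfrac^-1 (lbar x) = leval Xfrac x.
Proof. by rewrite leval_lbar ?invrK ?Xfrac_inv_neq0. Qed.

(* Identities in P are proved after the injective evaluation at u; conjugates are
   evaluated at u^-1 instead. *)
Local Ltac leval_eq :=
  apply: leval_Xfrac_inj;
  rewrite ?(leval_Xfrac_lbar, leval_Xfrac_inv_lbar, levalE Xfrac_neq0, levalE Xfrac_inv_neq0).

Lemma laddA : associative ladd. Proof. by move=> *; leval_eq; rewrite addrA. Qed.
Lemma laddC : commutative ladd. Proof. by move=> *; leval_eq; rewrite addrC. Qed.
Lemma ladd0 : left_id lzero ladd. Proof. by move=> *; leval_eq; rewrite add0r. Qed.
Lemma laddN : left_inverse lzero lopp ladd. Proof. by move=> *; leval_eq; rewrite addNr. Qed.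
Lemma lmulA : associative lmul. Proof. by move=> *; leval_eq; rewrite mulrA. Qed.
Lemma lmulC : commutative lmul. Proof. by move=> *; leval_eq; rewrite mulrC. Qed.
Lemma lmul1 : left_id lone lmul. Proof. by move=> *; leval_eq; rewrite mul1r. Qed.
Lemma lmulDl : left_distributive lmul ladd. Proof. by move=> *; leval_eq; rewrite mulrDl. Qed.

Lemma lone_neq0 : lone != lzero.
Proof.
apply/eqP => /(congr1 (leval Xfrac)); rewrite !(levalE Xfrac_neq0) => /eqP.
by rewrite oner_eq0.
Qed.

HB.instance Definition _ := [isSub for @proj1_sig _ lnormal : laurent -> _].
HB.instance Definition _ := [Choice of laurent by <:].
HB.instance Definition _ := GRing.isZmodule.Build laurent laddA laddC ladd0 laddN.
HB.instance Definition _ :=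
  GRing.Zmodule_isComNzRing.Build laurent lmulA lmulC lmul1 lmulDl lone_neq0.

Lemma laddE : ladd = +%R. Proof. by []. Qed.
Lemma lmulE : lmul = *%R. Proof. by []. Qed.
Lemma loppE : lopp = -%R. Proof. by []. Qed.
Lemma loneE : lone = 1. Proof. by []. Qed.

Lemma lmulfI (c x y : laurent) : c != 0 -> c * x = c * y -> x = y.
Proof.
move=> c_neq0 /(congr1 (leval Xfrac)); rewrite !(leval_mul Xfrac_neq0).
have : leval Xfrac c != 0.
  by apply: contra c_neq0 => /eqP; rewrite -(leval_lzero Xfrac_neq0) => /leval_Xfrac_inj ->.
by move=> /mulfI cI /cI /leval_Xfrac_inj.
Qed.

Lemma lmonoD k m : lmono (k + m) = lmono k * lmono m.
Proof. by leval_eq; rewrite expfzDr ?Xfrac_neq0. Qed.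

Lemma lmonoN k : lmono (- k) * lmono k = 1.
Proof. by rewrite -lmonoD addNr. Qed.

Lemma lu_luinv : lu * luinv = 1.
Proof. by rewrite -lmonoD. Qed.

Lemma lexp_lmono k : lexp (lmono k) = k.
Proof. by rewrite /lexp /= oner_eq0 /lval polyseq1 /= addr0. Qed.

Lemma lpoly_lmono k : lpoly (lmono k) = 1.
Proof. by rewrite /lpoly /= oner_eq0 /lval polyseq1 /= drop_poly0l. Qed.

Lemma lpoly0 : lpoly 0 = 0.
Proof. by rewrite /lpoly /= eqxx. Qed.

Lemma lbar_lmono k : lbar (lmono k) = lmono (- k).
Proof. by leval_eq; rewrite exprz_inv. Qed.

Lemma lbarB : zmod_morphism lbar.
Proof. by move=> x y; leval_eq. Qed.

Lemma lbar_monoid_morphism : monoid_morphism lbar.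
Proof. by split=> [|x y]; [rewrite -[1]/(lmono 0) lbar_lmono | leval_eq]. Qed.

HB.instance Definition _ := GRing.isZmodMorphism.Build laurent laurent lbar lbarB.
HB.instance Definition _ :=
  GRing.isMonoidMorphism.Build laurent laurent lbar lbar_monoid_morphism.

Lemma lbarK : involutive lbar.
Proof. by move=> x; leval_eq. Qed.

Lemma lbar_lu : lbar lu = luinv.
Proof. exact: lbar_lmono. Qed.

Definition lofpoly (p : {poly 'F_2}) : laurent := lnormalize 0 p.

Lemma leval_lofpoly p : leval Xfrac (lofpoly p) = tofrac p.
Proof. by rewrite leval_lnormalize ?Xfrac_neq0 // horner_cfrac_Xfrac expr0z mulr1. Qed.

Lemma lofpoly_inj : injective lofpoly.
Proof.
move=> p q /(congr1 (leval Xfrac)); rewrite !leval_lofpoly => /eqP.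
by rewrite tofrac_eq => /eqP.
Qed.

Lemma lofpolyB : zmod_morphism lofpoly.
Proof. by move=> p q; leval_eq; rewrite !leval_lofpoly rmorphB. Qed.

Lemma lofpoly_monoid_morphism : monoid_morphism lofpoly.
Proof. by split=> [|p q]; leval_eq; rewrite ?leval_lofpoly ?rmorph1 ?rmorphM. Qed.

HB.instance Definition _ := GRing.isZmodMorphism.Build _ _ lofpoly lofpolyB.
HB.instance Definition _ := GRing.isMonoidMorphism.Build _ _ lofpoly lofpoly_monoid_morphism.

Lemma lofpolyX : lofpoly 'X = lu.
Proof. by leval_eq; rewrite leval_lofpoly expr1z. Qed.

Lemma laurent_decomp x : x = lmono (lexp x) * lofpoly (lpoly x).
Proof. by leval_eq; rewrite leval_lofpoly leval_Xfrac mulrC. Qed.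

Lemma laurent_char2 : (2 : laurent) = 0.
Proof.
rewrite -(rmorph_nat lofpoly 2) -[RHS](rmorph0 lofpoly); congr lofpoly.
by rewrite -polyC_natr (_ : 2%:R = 0 :> 'F_2) ?polyC0 //; apply/eqP.
Qed.

Lemma laurent_oppE (x : laurent) : - x = x.
Proof.
by apply/eqP; rewrite -subr_eq0 -opprD -mulr2n -mulr_natl laurent_char2 mul0r oppr0.
Qed.

Definition lusym : laurent := lu + luinv.

Lemma lusym_neq0 : lusym != 0.
Proof.
apply/eqP => t0; suff /lofpoly_inj/eqP : lofpoly ('X^2 + 1) = lofpoly 0.
  by rewrite -[1]polyC1 (negbTE (monic_neq0 (monicXnaddC _ _))).
by rewrite rmorph0 rmorphD rmorphXn rmorph1 /= lofpolyX -(mulr0 lu) -t0 mulrDr lu_luinv expr2.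
Qed.

Lemma lbar_lusym : lbar lusym = lusym.
Proof. by rewrite rmorphD /= !lbar_lmono opprK addrC. Qed.

Lemma F2_neq0_eq1 (c : 'F_2) : c != 0 -> c = 1.
Proof. by case: c => [[|[|m]] //= lt_m2] _; apply: val_inj. Qed.

Lemma lnormalize_val (k : int) (p : {poly 'F_2}) :
  p`_0 != 0 -> val (lnormalize k p) = (k, p).
Proof.
move=> p0; have p_neq0 : p != 0 by apply: contraNneq p0 => ->; rewrite coef0.
rewrite /= (negbTE p_neq0) (_ : lval p = 0%N) ?addr0 ?drop_poly0l //.
by rewrite /lval; case: (polyseq p) p0 => [|c s] //= ->.
Qed.

Lemma lpoly_coef0 x : x != 0 -> (lpoly x)`_0 != 0.
Proof.
apply: contraNneq => p0; apply/eqP/val_inj.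
move: (valP x); rewrite /lnormal /lpoly in p0 *; case: (val x) p0 => k p /= p0.
by case: eqP => [-> /eqP -> | _]; rewrite ?p0 ?eqxx.
Qed.

Lemma lunit_lmono q v : q * v = 1 -> q = lmono (lexp q).
Proof.
move=> qv1; have [q_neq0 v_neq0] : q != 0 /\ v != 0.
  by split; apply: contra_eq_neq qv1 => ->; rewrite ?mul0r ?mulr0 eq_sym oner_neq0.
have := congr1 val qv1; rewrite !lnormalize_val ?coefC ?oner_neq0 //; last first.
  by rewrite coef0M mulf_neq0 ?lpoly_coef0.
case=> _ pqv1; have : lpoly q \is a GRing.unit by apply/unitrPr; exists (lpoly v).
rewrite poly_unitE => /andP[/eqP size_pq _].
apply: val_inj; rewrite lnormalize_val ?coefC ?oner_neq0 // [val q]surjective_pairing.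
change ((lexp q, lpoly q) = (lexp q, 1)); congr pair.
by rewrite [lpoly q]size1_polyC ?size_pq // (F2_neq0_eq1 (lpoly_coef0 q_neq0)).
Qed.

Lemma palindrome_unit q v : palindrome q -> q * v = 1 -> q = 1.
Proof.
move=> pal_q /lunit_lmono; set k := lexp q => qE.
have : lexp (lbar q) = k by rewrite pal_q.
by rewrite qE lbar_lmono lexp_lmono => kE; rewrite (_ : k = 0) //; lia.
Qed.

(* The gcd g of the polynomial parts divides xi_+ and xi_-, so it is a unit of P,
   i.e. a power of u; the normal form of xi_+ or xi_- forces that power to be 1. *)
Lemma minimal_bezout xi : minimal xi -> exists A B, A * xi.1 + B * xi.2 = 1.
Proof.
case: xi => x y /= min_xy; set g := gcdp (lpoly x) (lpoly y).
have dvd_g z : g %| lpoly z -> ldvd (lofpoly g) z.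
  move=> /divpK gz; exists (lmono (lexp z) * lofpoly (lpoly z %/ g)).
  by rewrite lmulE {1}[z]laurent_decomp -{1}gz rmorphM /=; ring.
have [w /lunit_lmono gE] := min_xy _ (dvd_g x (dvdp_gcdl _ _)) (dvd_g y (dvdp_gcdr _ _)).
have g_neq0 : g != 0.
  apply: contra_eq_neq gE => ->; rewrite rmorph0; apply/eqP => /(congr1 lpoly).
  by rewrite lpoly_lmono lpoly0 => /eqP; rewrite eq_sym oner_eq0.
have gX : g = 'X^(lval g).
  have := congr1 lpoly gE; rewrite lpoly_lmono /lpoly /= (negbTE g_neq0) /= => drop_g.
  by rewrite {1}(lval_split g) drop_g mul1r.
have g_coef0 : g`_0 != 0.
  have coef0_g z : z != 0 -> g %| lpoly z -> g`_0 != 0.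
    move=> /lpoly_coef0 + /divpK gz; apply: contra => /eqP g0.
    by rewrite -gz coef0M g0 mulr0.
  have [x0 | /coef0_g -> //] := eqVneq x 0; last exact: dvdp_gcdl.
  have [y0 | /coef0_g -> //] := eqVneq y 0; last exact: dvdp_gcdr.
  by move: g_neq0; rewrite /g x0 y0 lpoly0 gcd0p eqxx.
have /Bezout_eq1_coprimepP [[u1 u2] /= hu] : coprimep (lpoly x) (lpoly y).
  move: g_coef0; rewrite /coprimep -/g gX coefXn => /eqP.
  by case: (lval g) => // _; rewrite size_poly1.
set kx := lexp x; set ky := lexp y; have xE := laurent_decomp x; have yE := laurent_decomp y.
exists (lofpoly u1 * lmono (- kx)), (lofpoly u2 * lmono (- ky)).
rewrite xE yE -(rmorph1 lofpoly) -hu rmorphD !rmorphM /=.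
by ring: (lmonoN kx) (lmonoN ky).
Qed.

Definition trace_divisible f := exists q, f + lbar f = lusym * q.

Lemma trace_divisibleD f g :
  trace_divisible f -> trace_divisible g -> trace_divisible (f + g).
Proof. by move=> [p fE] [q gE]; exists (p + q); rewrite rmorphD mulrDr -fE -gE; ring. Qed.

Lemma trace_divisibleM f g :
  trace_divisible f -> trace_divisible g -> trace_divisible (f * g).
Proof.
move=> [p fE] [q gE]; exists (g * p + lbar f * q).
by rewrite rmorphM mulrDr mulrCA -fE mulrCA -gE; ring: laurent_char2.
Qed.

Lemma trace_divisible_lmono k : trace_divisible (lmono k).
Proof.
have du : trace_divisible lu by exists 1; rewrite lbar_lmono mulr1.
have dv : trace_divisible luinv by exists 1; rewrite lbar_lmono opprK mulr1 addrC.
have d1 : trace_divisible 1 by exists 0; rewrite rmorph1 mulr0; ring: laurent_char2.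
case: k => n; elim: n => [|n IH]; [exact: d1 | | exact: dv |].
  by rewrite -addn1 PoszD lmonoD; apply: trace_divisibleM.
by rewrite (_ : Negz n.+1 = Negz n + -1) ?lmonoD; [apply: trace_divisibleM | lia].
Qed.

Lemma trace_divisible_lofpoly p : trace_divisible (lofpoly p).
Proof.
elim/poly_ind: p => [|p c IH]; first by exists 0; rewrite !rmorph0 add0r mulr0.
rewrite rmorphD rmorphM /= lofpolyX; apply: trace_divisibleD.
  exact: trace_divisibleM IH (trace_divisible_lmono 1).
have [-> | /F2_neq0_eq1 ->] := eqVneq c 0.
  by exists 0; rewrite polyC0 !rmorph0 add0r mulr0.
by rewrite polyC1 rmorph1; exact: (trace_divisible_lmono 0).
Qed.

Lemma trace_divisible_all f : trace_divisible f.
Proof.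
rewrite [f]laurent_decomp.
by apply: trace_divisibleM; [exact: trace_divisible_lmono | exact: trace_divisible_lofpoly].
Qed.

Lemma trace_quotient_palindrome f q : f + lbar f = lusym * q -> palindrome q.
Proof.
move=> fE; apply: (lmulfI lusym_neq0); rewrite -[in LHS]lbar_lusym -rmorphM -fE.
by rewrite rmorphD /= lbarK addrC.
Qed.

Section CharTwo.
Variable R : comNzRingType.
Hypothesis char2 : (2 : R) = 0.

(* If a x = u x and a y = v y, then (x /\ y) (a + v) = (u + v) x (y_-, y_+), entry by
   entry; contracting with Bezout vectors for x and y exhibits x /\ y as a divisor of
   u + v. *)
Lemma eigenvector_wedge_dvd (u v al be ga de x1 x2 y1 y2 A B A' B' : R) :
  al * x1 + be * x2 = u * x1 -> ga * x1 + de * x2 = u * x2 ->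
  al * y1 + be * y2 = v * y1 -> ga * y1 + de * y2 = v * y2 ->
  A * x1 + B * x2 = 1 -> A' * y1 + B' * y2 = 1 ->
  (x1 * y2 + y1 * x2) * (A * ((al + v) * B' + be * A') + B * (ga * B' + (de + v) * A'))
    = u + v.
Proof.
move=> h1 h2 h1' h2' bez bez'; set w := x1 * y2 + y1 * x2.
have w_al : w * (al + v) = (u + v) * (x1 * y2).
  transitivity (y2 * (al * x1 + be * x2) + x2 * (al * y1 + be * y2) + v * w).
    by rewrite /w; ring: char2.
  by rewrite h1 h1' /w; ring: char2.
have w_be : w * be = (u + v) * (x1 * y1).
  transitivity (x1 * (al * y1 + be * y2) + y1 * (al * x1 + be * x2)).
    by rewrite /w; ring: char2.
  by rewrite h1 h1'; ring: char2.
have w_ga : w * ga = (u + v) * (x2 * y2).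
  transitivity (y2 * (ga * x1 + de * x2) + x2 * (ga * y1 + de * y2)).
    by rewrite /w; ring: char2.
  by rewrite h2 h2'; ring: char2.
have w_de : w * (de + v) = (u + v) * (x2 * y1).
  transitivity (x1 * (ga * y1 + de * y2) + y1 * (ga * x1 + de * x2) + v * w).
    by rewrite /w; ring: char2.
  by rewrite h2 h2' /w; ring: char2.
transitivity (A * (w * (al + v) * B' + w * be * A') + B * (w * ga * B' + w * (de + v) * A')).
  by ring.
rewrite w_al w_be w_ga w_de.
transitivity ((u + v) * ((A * x1 + B * x2) * (A' * y1 + B' * y2))); first by ring.
by rewrite bez bez' !mulr1.
Qed.

Lemma cramer22 (u p q r s x1 x2 : R) :
  p * s + q * r = 1 -> p * x1 + q * x2 = 1 -> r * x1 + s * x2 = u ->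
  x1 = s + q * u /\ x2 = r + p * u.
Proof.
move=> det e1 e2; split.
  transitivity (x1 * (p * s + q * r)); first by rewrite det mulr1.
  transitivity (s * (p * x1 + q * x2) + q * (r * x1 + s * x2)); first by ring: char2.
  by rewrite e1 e2 mulr1.
transitivity (x2 * (p * s + q * r)); first by rewrite det mulr1.
transitivity (r * (p * x1 + q * x2) + p * (r * x1 + s * x2)); first by ring: char2.
by rewrite e1 e2 mulr1.
Qed.

End CharTwo.

Definition mx22 (p q r s : laurent) : lmx :=
  \matrix_(i, j) if i == i0 then (if j == i0 then p else q) else (if j == i0 then r else s).

Lemma ldetE (A : lmx) : ldet A = A i0 i0 * A i1 i1 + A i0 i1 * A i1 i0.
Proof. by rewrite /ldet /lsub laddE lmulE loppE laurent_oppE. Qed.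

Lemma mxact_mx22 p q r s x1 x2 :
  mxact (mx22 p q r s) (x1, x2) = (p * x1 + q * x2, r * x1 + s * x2).
Proof. by rewrite /mxact !mxE. Qed.

Lemma csca_mx22 p q r s :
  palindrome p -> palindrome q -> palindrome r -> palindrome s -> p * s + q * r = 1 ->
  csca (mx22 p q r s).
Proof.
move=> pp pq pr ps det; split; last by rewrite ldetE !mxE.
by move=> i j; rewrite mxE; case: ifP; case: ifP.
Qed.

Lemma cscaP (A : lmx) : csca A -> exists p q r s,
  [/\ A = mx22 p q r s, [/\ palindrome p, palindrome q, palindrome r & palindrome s]
    & p * s + q * r = 1].
Proof.
move=> [pal det]; exists (A i0 i0), (A i0 i1), (A i1 i0), (A i1 i1).
split=> //; last by rewrite -ldetE.
have ord2 (k : 'I_2) : k = if k == i0 then i0 else i1.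
  by case: k => [[|[|]]] //= ?; apply: val_inj.
by apply/matrixP => i j; rewrite mxE {1}(ord2 i) {1}(ord2 j); case: (i == i0); case: (j == i0).
Qed.

Lemma palindrome_add_lu x q :
  x + lbar x = lusym * q -> palindrome q -> palindrome (x + q * lu).
Proof.
move=> xE pal_q; rewrite /palindrome rmorphD rmorphM /= pal_q lbar_lu.
have -> : lbar x = x + lusym * q by rewrite -xE; ring: laurent_char2.
by rewrite /lusym; ring: laurent_char2.
Qed.

Lemma csca_normal_of_wedge xi : wedge xi (vbar xi) = luinv + lu ->
  exists b : lmx, csca b /\ mxact b xi = (lone, lu).
Proof.
case: xi => x1 x2; rewrite /wedge laddE lmulE /= => w.
have [q1 e1] := trace_divisible_all x1; have [q2 e2] := trace_divisible_all x2.
have bx1 : lbar x1 = x1 + lusym * q1 by rewrite -e1; ring: laurent_char2.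
have bx2 : lbar x2 = x2 + lusym * q2 by rewrite -e2; ring: laurent_char2.
have bez : q2 * x1 + q1 * x2 = 1.
  apply: (lmulfI lusym_neq0); rewrite mulr1 {2}(_ : lusym = luinv + lu) 1?addrC //.
  by rewrite -w bx1 bx2; ring: laurent_char2.
exists (mx22 q2 q1 (x2 + q2 * lu) (x1 + q1 * lu)); split.
  apply: csca_mx22.
  - exact: trace_quotient_palindrome e2.
  - exact: trace_quotient_palindrome e1.
  - exact: palindrome_add_lu e2 (trace_quotient_palindrome e2).
  - exact: palindrome_add_lu e1 (trace_quotient_palindrome e1).
  - by rewrite -bez; ring: laurent_char2.
rewrite mxact_mx22; congr pair; first exact: bez.
transitivity (lu * (q2 * x1 + q1 * x2)); first by ring: laurent_char2.
by rewrite bez mulr1.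
Qed.

Lemma wedge_of_csca_normal xi : (exists b : lmx, csca b /\ mxact b xi = (lone, lu)) ->
  wedge xi (vbar xi) = luinv + lu.
Proof.
case: xi => x1 x2 [_ [/cscaP [p [q [r [s [-> [pp pq pr ps] det]]]]]]].
rewrite mxact_mx22 => /pair_equal_spec[e1 e2].
have [-> ->] := cramer22 laurent_char2 det e1 e2.
rewrite /wedge laddE lmulE /= !rmorphD !rmorphM /= pp pq pr ps lbar_lu.
transitivity ((luinv + lu) * (p * s + q * r)); first by ring: laurent_char2.
by rewrite det mulr1.
Qed.

(* a = b^-1 [[0, 1], [1, u + u^-1]] b, with b^-1 = adj b in characteristic 2. *)
Lemma csca_eigen_of_csca_normal xi : (exists b : lmx, csca b /\ mxact b xi = (lone, lu)) ->
  exists a : lmx, csca a /\ mxact a xi = vscale lu xi.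
Proof.
case: xi => x1 x2 [_ [/cscaP [p [q [r [s [-> [pp pq pr ps] det]]]]]]].
rewrite mxact_mx22 => /pair_equal_spec[e1 e2].
have [x1E x2E] := cramer22 laurent_char2 det e1 e2.
exists (mx22 (s * r + q * p + lusym * q * r) (s * s + q * q + lusym * q * s)
             (r * r + p * p + lusym * p * r) (r * s + p * q + lusym * p * s)); split.
  apply: csca_mx22; try by rewrite /palindrome !rmorphD !rmorphM /= ?pp ?pq ?pr ?ps lbar_lusym.
  transitivity ((p * s + q * r) ^+ 2); first by ring: laurent_char2.
  by rewrite det expr1n.
rewrite mxact_mx22 /vscale lmulE /=; congr pair.
  transitivity (s * (r * x1 + s * x2) + q * (p * x1 + q * x2) + lusym * q * (r * x1 + s * x2)).
    by ring.
  by rewrite e1 e2 x1E /lusym loneE; ring: laurent_char2 lu_luinv.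
transitivity (r * (r * x1 + s * x2) + p * (p * x1 + q * x2) + lusym * p * (r * x1 + s * x2)).
  by ring.
by rewrite e1 e2 x2E /lusym loneE; ring: laurent_char2 lu_luinv.
Qed.

Lemma wedge_of_csca_eigen xi : minimal xi ->
  (exists a : lmx, csca a /\ mxact a xi = vscale lu xi) -> wedge xi (vbar xi) = luinv + lu.
Proof.
case: xi => x1 x2 /minimal_bezout [A [B /= bez]].
case=> _ [/cscaP [al [be [ga [de [-> [pal pbe pga pde] _]]]]]].
rewrite mxact_mx22 /vscale lmulE /= => /pair_equal_spec[h1 h2].
have h1' := congr1 lbar h1; have h2' := congr1 lbar h2; have bez' := congr1 lbar bez.
rewrite !rmorphD !rmorphM /= pal pbe lbar_lu in h1'.
rewrite !rmorphD !rmorphM /= pga pde lbar_lu in h2'.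
rewrite rmorphD !rmorphM rmorph1 /= in bez'.
have [q qE] := trace_divisible_all (x1 * lbar x2).
have pal_q := trace_quotient_palindrome qE; rewrite rmorphM /= lbarK in qE.
have := eigenvector_wedge_dvd laurent_char2 h1 h2 h1' h2' bez bez'.
rewrite qE -mulrA -/lusym -{2}(mulr1 lusym) => /(lmulfI lusym_neq0).
move=> /(palindrome_unit pal_q) q1.
by rewrite /wedge laddE lmulE /= qE q1 mulr1 addrC.
Qed.

Theorem mainTheorem4 (xi : lvec) :
  minimal xi ->
  ((exists a : lmx, csca a /\ mxact a xi = vscale lu xi) <->
   (exists b : lmx, csca b /\ mxact b xi = (lone, lu))) /\
  ((exists b : lmx, csca b /\ mxact b xi = (lone, lu)) <->
   wedge xi (vbar xi) = ladd luinv lu).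
Proof.
move=> min_xi; split; split.
- by move=> /(wedge_of_csca_eigen min_xi) /csca_normal_of_wedge.
- exact: csca_eigen_of_csca_normal.
- exact: wedge_of_csca_normal.
- exact: csca_normal_of_wedge.
Qed.
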